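(* For all integers $n\ge1$ and $p\ge0$, $$\mathcal{B}_{n,p}=\frac{2\,n!\,p!}{\pi e}\operatorname{Im}\int_0^{\pi}\left(\frac{\exp\big(\exp(e^{i\theta})\big)}{\big(\exp(e^{i\theta})-1\big)^{p}}-e\sum_{l=0}^{p-1}\frac{\big(\exp(e^{i\theta})-1\big)^{l-p}}{l!}\right)\sin(n\theta)\,d\theta,$$ where $\operatorname{Im}$ denotes the imaginary part.
   Context: For an integer $p\ge0$, the $p$-Bell numbers $\mathcal{B}_{n,p}$ are defined by $\sum_{n\ge0}\mathcal{B}_{n,p}\frac{z^n}{n!}=\sum_{n\ge0}\binom{n+p}{p}^{-1}\frac{(e^z-1)^n}{n!}$. *)

From Stdlib Require Import Reals Arith Factorial Binomial.
From Coquelicot Require Import Coquelicot.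
Open Scope R_scope.

(* The exponential generating function of the p-Bell numbers, as a real
   function of z:  sum_{k>=0} binom(k+p,p)^{-1} (e^z-1)^k / k!  *)
Definition pBell_egf (p : nat) (z : R) : R :=
  Series (fun k => (exp z - 1) ^ k / (INR (fact k) * Binomial.C (k + p) p)).

(* B_{n,p} = n! [z^n] EGF = n-th derivative of the EGF at 0. *)
Definition pBell (n p : nat) : R := Derive_n (pBell_egf p) n 0.

Definition Cexp (z : C) : C := (exp (Re z) * cos (Im z), exp (Re z) * sin (Im z)).

(* The integrand of Theorem 7 (complex-valued); negative powers u^(l-p) with
   l < p are written as 1/u^(p-l). *)
Definition thm7_integrand (n p : nat) (t : R) : C :=
  let w := Cexp (Cexp (Cexp ((0, t) : C))) in
  let u := Cminus (Cexp (Cexp ((0, t) : C))) (RtoC 1) in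
  Cmult
    (Cminus (Cdiv w (Cpow u p))
            (Cmult (RtoC (exp 1))
               (sum_n (fun l => if (l <? p)%nat
                                then Cdiv (RtoC 1) (Cmult (RtoC (INR (fact l))) (Cpow u (p - l)))
                                else RtoC 0) p)))
    (RtoC (sin (INR n * t))).

(* Put u = exp(e^{it}) - 1.  Since exp(u + 1) = e exp(u), the bracket in the
   integrand is e (exp(u)/u^p minus its principal part) = e sum_k u^k/(k+p)!.
   Expanding u^k = sum_j (-1)^(k-j) C(k,j) exp(j e^{it}) and
   Im exp(j e^{it}) = sum_m j^m sin(m t)/m!, the orthogonality of the sines on
   [0, pi] keeps only m = n, so the k-th term integrates to
   (pi e / (2 n!)) sum_j (-1)^(k-j) C(k,j) j^n / (k+p)!.  On the other side the
   EGF is sum_k p!/(k+p)! sum_j (-1)^(k-j) C(k,j) e^{jx}, whose n-th derivative at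
   0 is sum_k p!/(k+p)! sum_j (-1)^(k-j) C(k,j) j^n.  All the exchanges of sums
   with integrals and derivatives are justified by normal convergence. *)

From Stdlib Require Import Reals Factorial Lra Lia.
From Coquelicot Require Import Coquelicot.
Open Scope R_scope.

(* Equations coming from Coquelicot's generic sums are typed in a structure over
   [R] or [C]; [ring] and [field] need the carrier type itself. *)
Ltac in_type T := match goal with |- ?x = ?y => change (@eq T x y) end.

Lemma fact_pos m : 0 < INR (fact m).
Proof. apply lt_0_INR, lt_O_fact. Qed.

Lemma fact_neq_0_C l : RtoC (INR (fact l)) <> 0%C.
Proof. intros H. apply RtoC_inj in H. pose proof (fact_pos l). lra. Qed.

Lemma exp_le_compat x y : x <= y -> exp x <= exp y.
Proof. intros [H|<-]; [left; now apply exp_increasing | right; reflexivity]. Qed.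

Lemma exp_pow_INR x j : exp x ^ j = exp (INR j * x).
Proof.
  induction j as [|j IH]; [simpl; now rewrite Rmult_0_l, exp_0|].
  simpl pow. rewrite IH, S_INR, <- exp_plus. f_equal. ring.
Qed.

Lemma INR_le_pow2 k : INR k <= 2 ^ k.
Proof.
  induction k as [|k IH]; [simpl; lra|].
  rewrite S_INR. simpl. pose proof (pow_R1_Rle 2 k ltac:(lra)). lra.
Qed.

Lemma Rabs_sin_le_1 x : Rabs (sin x) <= 1.
Proof. apply Rabs_le, SIN_bound. Qed.

Lemma im_le_Cmod (c : C) : Rabs (Im c) <= Cmod c.
Proof.
  unfold Cmod. rewrite <- sqrt_Rsqr_abs. apply sqrt_le_1_alt. unfold Rsqr.
  destruct c; simpl. nra.
Qed.

Lemma norm_C_R (z : C) : @norm R_AbsRing C_R_NormedModule z = Cmod z.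
Proof.
  change (sqrt (Rabs (fst z) ^ 2 + Rabs (snd z) ^ 2) = Cmod z).
  now rewrite !pow2_abs.
Qed.

Lemma ex_series_exp (x : R) : ex_series (fun k => x ^ k / INR (fact k)).
Proof.
  exists (exp x). eapply is_series_ext; [|apply (is_exp_Reals x)].
  intros k. simpl. rewrite pow_n_pow. unfold scal; simpl. unfold mult; simpl. unfold Rdiv. ring.
Qed.

Lemma sum_n_le_loc (a b : nat -> R) N :
  (forall j, (j <= N)%nat -> a j <= b j) -> sum_n a N <= sum_n b N.
Proof.
  induction N as [|N IH]; intros H; [rewrite !sum_O; auto|].
  rewrite !sum_Sn. apply Rplus_le_compat; auto.
Qed.

Lemma sum_n_shift {G : AbelianMonoid} (a : nat -> G) k :
  sum_n a (S k) = plus (a 0%nat) (sum_n (fun j => a (S j)) k).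
Proof. unfold sum_n. rewrite sum_Sn_m by lia. now rewrite <- sum_n_m_S. Qed.

Lemma sum_n_Cminus (a b : nat -> C) k :
  sum_n (fun j => a j - b j)%C k = (sum_n a k - sum_n b k)%C.
Proof.
  induction k as [|k IH]; [now rewrite !sum_O|].
  rewrite !sum_Sn, IH. unfold plus; simpl. in_type C; ring.
Qed.

Lemma sum_n_Cmult_l (c : C) (a : nat -> C) k :
  sum_n (fun j => c * a j)%C k = (c * sum_n a k)%C.
Proof.
  induction k as [|k IH]; [now rewrite !sum_O|].
  rewrite !sum_Sn, IH. unfold plus; simpl. in_type C; ring.
Qed.

Lemma Re_sum_n (a : nat -> C) N : Re (sum_n a N) = sum_n (fun k => Re (a k)) N.
Proof. induction N as [|N IH]; [now rewrite !sum_O|]. now rewrite !sum_Sn, <- IH. Qed.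

Lemma Im_sum_n (a : nat -> C) N : Im (sum_n a N) = sum_n (fun k => Im (a k)) N.
Proof. induction N as [|N IH]; [now rewrite !sum_O|]. now rewrite !sum_Sn, <- IH. Qed.

Lemma is_series_Re_Im (a : nat -> C) (l : C) :
  is_series a l <->
  is_series (fun k => Re (a k)) (Re l) /\ is_series (fun k => Im (a k)) (Im l).
Proof.
  split.
  - intros H. split; apply filterlim_locally; intros eps;
      destruct (proj1 (filterlim_locally _ _) H eps) as [N HN]; exists N; intros k Hk;
      [rewrite <- Re_sum_n; exact (proj1 (HN k Hk)) | rewrite <- Im_sum_n; exact (proj2 (HN k Hk))].
  - intros [H1 H2]. apply filterlim_locally. intros eps.
    destruct (proj1 (filterlim_locally _ _) H1 eps) as [N1 HN1],
             (proj1 (filterlim_locally _ _) H2 eps) as [N2 HN2].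
    exists (max N1 N2). intros k Hk. split.
    + rewrite Re_sum_n. apply HN1. lia.
    + rewrite Im_sum_n. apply HN2. lia.
Qed.

Lemma is_series_tail {K : AbsRing} {V : NormedModule K} (a : nat -> V) l N :
  is_series a l -> is_series (fun k => a (S N + k)%nat) (minus l (sum_n a N)).
Proof.
  intros Ha. apply is_series_incr_n; [lia|].
  simpl pred. unfold minus. rewrite <- plus_assoc. now rewrite (plus_opp_l (G := V)), plus_zero_r.
Qed.

Lemma is_series_drop {K : AbsRing} {V : NormedModule K} (a : nat -> V) l p :
  is_series a l ->
  is_series (fun k => a (p + k)%nat)
    (minus l (sum_n (fun j => if (j <? p)%nat then a j else zero) p)).
Proof.
  intros Ha. destruct p as [|q].
  - rewrite sum_O. simpl. now rewrite (minus_zero_r (G := V)).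
  - replace (sum_n _ (S q)) with (sum_n a q); [exact (is_series_tail a l q Ha)|].
    rewrite sum_Sn, Nat.ltb_irrefl, plus_zero_r.
    apply sum_n_ext_loc. intros j Hj. now destruct (Nat.ltb_spec j (S q)); [|lia].
Qed.

Lemma sum_n_indicator n v N :
  sum_n (fun m => if Nat.eqb m n then v else 0) N = if Nat.leb n N then v else 0.
Proof.
  induction N as [|N IH].
  - rewrite sum_O. now destruct n.
  - rewrite sum_Sn, IH. change (plus ?a ?b) with (a + b).
    destruct (Nat.eqb_spec (S N) n), (Nat.leb_spec n N), (Nat.leb_spec n (S N)); lia || lra.
Qed.

Lemma is_series_indicator n v : is_series (fun m => if Nat.eqb m n then v else 0) v.
Proof.
  apply (filterlim_ext_loc (fun _ => v)); [|apply filterlim_const].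
  exists n. intros N HN. rewrite sum_n_indicator. now destruct (Nat.leb_spec n N); [|lia].
Qed.

Lemma norm_is_series_le {K : AbsRing} {V : NormedModule K} (a : nat -> V) (M : nat -> R) l s :
  (forall k, norm (a k) <= M k) -> is_series a l -> is_series M s -> norm l <= s.
Proof.
  intros HM Ha HMs.
  apply (filterlim_le (F := eventually) (fun N => norm (sum_n a N)) (sum_n M) (norm l) s).
  - exists 0%nat. intros N _. eapply Rle_trans; [apply norm_sum_n_m|].
    apply sum_n_m_le. exact HM.
  - exact (filterlim_comp nat V R (sum_n a) norm eventually (locally l) _ Ha (filterlim_norm l)).
  - exact HMs.
Qed.

Lemma is_RInt_sum_n {V : NormedModule R_AbsRing} (f : nat -> R -> V) (I : nat -> V) a b N :
  (forall k, is_RInt (f k) a b (I k)) ->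
  is_RInt (fun x => sum_n (fun k => f k x) N) a b (sum_n I N).
Proof.
  intros HI. induction N as [|N IH].
  - rewrite sum_O. eapply is_RInt_ext; [|apply HI]. intros x _. now rewrite sum_O.
  - rewrite sum_Sn. eapply is_RInt_ext; [|exact (is_RInt_plus _ _ _ _ _ _ IH (HI (S N)))].
    intros x _. now rewrite sum_Sn.
Qed.

(* The M-test bound makes the partial sums converge uniformly, so that
   [filterlim_RInt] passes the limit through the integral. *)
Lemma is_RInt_series {V : CompleteNormedModule R_AbsRing}
  (f : nat -> R -> V) (F : R -> V) (I : nat -> V) (M : nat -> R) a b :
  (forall k, is_RInt (f k) a b (I k)) ->
  (forall k x, norm (f k x) <= M k) -> ex_series M ->
  (forall x, is_series (fun k => f k x) (F x)) ->
  exists l, is_series I l /\ is_RInt F a b l.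
Proof.
  intros HI HM [s Hs] HF.
  apply (filterlim_RInt (fun N x => sum_n (fun k => f k x) N) a b eventually _ F (sum_n I)).
  { intros N. exact (is_RInt_sum_n f I a b N HI). }
  apply filterlim_locally. intros eps.
  destruct (proj1 (filterlim_locally _ s) Hs eps) as [N0 HN0].
  exists N0. intros N HN x.
  apply (@norm_compat1 R_AbsRing V). rewrite <- (norm_opp (V := V)), (opp_minus (G := V)).
  assert (Htail : norm (minus (F x) (sum_n (fun k => f k x) N)) <= minus s (sum_n M N)).
  { apply (norm_is_series_le (fun k => f (S N + k)%nat x) (fun k => M (S N + k)%nat)).
    - intros k. apply HM.
    - exact (@is_series_tail R_AbsRing V _ _ N (HF x)).
    - exact (is_series_tail _ _ N Hs). }
  eapply Rle_lt_trans; [exact Htail|].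
  specialize (HN0 N HN). change (Rabs (sum_n M N - s) < eps) in HN0.
  apply Rabs_def2 in HN0.
  change (minus s (sum_n M N)) with (s - sum_n M N). lra.
Qed.

(** * Orthogonality of the sines *)

Lemma is_RInt_antiderivative (F f : R -> R) a b l :
  (forall x, is_derive F x (f x)) -> (forall x, continuous f x) -> F b - F a = l ->
  is_RInt f a b l.
Proof.
  intros HF Hf <-. apply (is_RInt_derive (V := R_CompleteNormedModule)); intros x _; auto.
Qed.

Lemma sin_IZR_mult_PI (z : Z) : sin (IZR z * PI) = 0.
Proof. apply sin_eq_0_1. now exists z. Qed.

Lemma is_RInt_sin_mult_sin (m n : nat) : (1 <= n)%nat ->
  is_RInt (fun t => sin (INR m * t) * sin (INR n * t)) 0 PI
    (if Nat.eqb m n then PI / 2 else 0).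
Proof.
  intros Hn. assert (Hn0 : INR n <> 0) by (apply not_0_INR; lia).
  assert (Hcont : forall x, continuous (fun t => sin (INR m * t) * sin (INR n * t)) x).
  { intros x. apply (ex_derive_continuous (V := R_NormedModule)). auto_derive. easy. }
  destruct (Nat.eqb_spec m n) as [<-|Hmn].
  - apply (is_RInt_antiderivative (fun t => t / 2 - sin (2 * INR m * t) / (4 * INR m))); auto.
    + intros x. auto_derive; [easy|].
      replace (2 * INR m * x) with (INR m * x + INR m * x) by ring.
      rewrite cos_plus. pose proof (sin2_cos2 (INR m * x)) as S2. unfold Rsqr in S2.
      field_simplify; [lra|easy].
    + replace (2 * INR m * PI) with (IZR (2 * Z.of_nat m) * PI)
        by (rewrite mult_IZR, <- INR_IZR_INZ; ring).
      rewrite sin_IZR_mult_PI, Rmult_0_r, sin_0. field; easy.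
  - assert (Hd : INR m - INR n <> 0) by (intros H; apply Hmn, INR_eq; lra).
    assert (Hs : INR m + INR n <> 0)
      by (assert (0 < INR n) by (apply lt_0_INR; lia); pose proof (pos_INR m); lra).
    apply (is_RInt_antiderivative
             (fun t => sin ((INR m - INR n) * t) / (2 * (INR m - INR n))
                       - sin ((INR m + INR n) * t) / (2 * (INR m + INR n)))); auto.
    + intros x. auto_derive; [easy|].
      replace ((INR m - INR n) * x) with (INR m * x - INR n * x) by ring.
      replace ((INR m + INR n) * x) with (INR m * x + INR n * x) by ring.
      rewrite cos_plus, cos_minus. field. split; easy.
    + replace ((INR m - INR n) * PI) with (IZR (Z.of_nat m - Z.of_nat n) * PI)
        by (rewrite minus_IZR, <- !INR_IZR_INZ; ring).
      replace ((INR m + INR n) * PI) with (IZR (Z.of_nat m + Z.of_nat n) * PI)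
        by (rewrite plus_IZR, <- !INR_IZR_INZ; ring).
      rewrite !sin_IZR_mult_PI, !Rmult_0_r, sin_0. field; easy.
Qed.

(** * The complex exponential series *)

Lemma is_derive_0_const (f : R -> R) : (forall t, is_derive f t 0) -> forall t, f t = f 0.
Proof.
  intros Hf t. destruct (Rtotal_order t 0) as [Ht|[->|Ht]]; [|easy|].
  - apply eq_is_derive; [intros s _; apply Hf | exact Ht].
  - symmetry. apply eq_is_derive; [intros s _; apply Hf | exact Ht].
Qed.

(* If (X + iY)' = (a + ib)(X + iY), then e^{-(a+ib)t} (X + iY) is constant. *)
Lemma linear_system_conserved (a b : R) (X Y : R -> R) :
  (forall t, is_derive X t (a * X t - b * Y t)) ->
  (forall t, is_derive Y t (b * X t + a * Y t)) ->
  forall t, exp (- a * t) * (X t * cos (b * t) + Y t * sin (b * t)) = X 0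
         /\ exp (- a * t) * (Y t * cos (b * t) - X t * sin (b * t)) = Y 0.
Proof.
  intros DX DY t. split.
  - rewrite (is_derive_0_const (fun s => exp (- a * s) * (X s * cos (b * s) + Y s * sin (b * s)))).
    + rewrite !Rmult_0_r, exp_0, cos_0, sin_0. ring.
    + intros s. evar (d : R). replace 0 with d.
      * apply (is_derive_mult (fun s => exp (- a * s))); [auto_derive; auto| |intros; apply Rmult_comm].
        apply (is_derive_plus (fun s => X s * cos (b * s))).
        -- apply (is_derive_mult X); [apply DX|auto_derive; auto|intros; apply Rmult_comm].
        -- apply (is_derive_mult Y); [apply DY|auto_derive; auto|intros; apply Rmult_comm].
      * unfold d, plus, scal, mult; simpl. unfold mult; simpl. ring.
  - rewrite (is_derive_0_const (fun s => exp (- a * s) * (Y s * cos (b * s) - X s * sin (b * s)))).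
    + rewrite !Rmult_0_r, exp_0, cos_0, sin_0. ring.
    + intros s. evar (d : R). replace 0 with d.
      * apply (is_derive_mult (fun s => exp (- a * s))); [auto_derive; auto| |intros; apply Rmult_comm].
        apply (is_derive_minus (fun s => Y s * cos (b * s))).
        -- apply (is_derive_mult Y); [apply DY|auto_derive; auto|intros; apply Rmult_comm].
        -- apply (is_derive_mult X); [apply DX|auto_derive; auto|intros; apply Rmult_comm].
      * unfold d, minus, plus, opp, scal, mult; simpl. unfold mult; simpl. ring.
Qed.

Lemma linear_system_solution (a b : R) (X Y : R -> R) :
  (forall t, is_derive X t (a * X t - b * Y t)) ->
  (forall t, is_derive Y t (b * X t + a * Y t)) ->
  X 0 = 1 -> Y 0 = 0 ->
  forall t, X t = exp (a * t) * cos (b * t) /\ Y t = exp (a * t) * sin (b * t).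
Proof.
  intros DX DY X0 Y0 t.
  destruct (linear_system_conserved a b X Y DX DY t) as [Hg Hh]. rewrite X0 in Hg. rewrite Y0 in Hh.
  assert (E : exp (a * t) * exp (- a * t) = 1) by (rewrite <- exp_plus, <- exp_0; f_equal; ring).
  pose proof (sin2_cos2 (b * t)) as S2. unfold Rsqr in S2.
  set (c := cos (b * t)) in *. set (s := sin (b * t)) in *.
  assert (H1 : X t * c + Y t * s = exp (a * t)).
  { rewrite <- (Rmult_1_l (_ + _)), <- E, Rmult_assoc, Hg. ring. }
  assert (H2 : Y t * c - X t * s = 0).
  { rewrite <- (Rmult_1_l (_ - _)), <- E, Rmult_assoc, Hh. ring. }
  split.
  - transitivity (X t * (s * s + c * c)); [rewrite S2; ring|].
    transitivity (c * (X t * c + Y t * s) - s * (Y t * c - X t * s)); [ring|].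
    rewrite H1, H2. ring.
  - transitivity (Y t * (s * s + c * c)); [rewrite S2; ring|].
    transitivity (s * (X t * c + Y t * s) + c * (Y t * c - X t * s)); [ring|].
    rewrite H1, H2. ring.
Qed.

Lemma CV_radius_infinite (a : nat -> R) :
  (forall r, ex_series (fun n => a n * r ^ n)) -> forall x, Rbar_lt (Rabs x) (CV_radius a).
Proof.
  intros Ha x. destruct (Rbar_lt_dec (Rabs x) (CV_radius a)) as [H|H]; [exact H|exfalso].
  apply Rbar_not_lt_le in H. pose proof (Rabs_pos x).
  apply (CV_disk_outside a (Rabs x + 1)).
  - rewrite Rabs_pos_eq by lra. eapply Rbar_le_lt_trans; [exact H|]. simpl. lra.
  - apply ex_series_lim_0, Ha.
Qed.

Lemma ex_series_exp_dominated (c : nat -> R) K r :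
  (forall m, Rabs (c m) <= K ^ m / INR (fact m)) -> ex_series (fun m => c m * r ^ m).
Proof.
  intros Hc.
  apply (ex_series_le (V := R_CompleteNormedModule) _ (fun m => (K * Rabs r) ^ m / INR (fact m))).
  - intros m. change (norm ?x) with (Rabs x).
    rewrite Rabs_mult, <- RPow_abs, Rpow_mult_distr.
    replace (K ^ m * Rabs r ^ m / INR (fact m)) with (K ^ m / INR (fact m) * Rabs r ^ m)
      by (unfold Rdiv; ring).
    apply Rmult_le_compat_r; [apply pow_le, Rabs_pos | apply Hc].
  - apply ex_series_exp.
Qed.

(* The power series with coefficients Re(z^m)/m! and Im(z^m)/m! solve the linear
   system with (a, b) = (Re z, Im z); evaluating at 1 identifies them with Cexp z. *)
Section ExpSeries.

Variable z : C.

Let cRe m := Re (z ^ m)%C / INR (fact m).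
Let cIm m := Im (z ^ m)%C / INR (fact m).

Lemma PS_derive_cRe m : PS_derive cRe m = Re z * cRe m - Im z * cIm m.
Proof.
  unfold PS_derive, cRe, cIm. change (fact (S m)) with (S m * fact m)%nat. rewrite mult_INR.
  pose proof (fact_pos m). assert (INR (S m) <> 0) by (apply not_0_INR; lia).
  simpl Cpow. destruct z as [a b], (Cpow (a, b) m) as [c d]. cbn -[INR fact]. field. split; lra.
Qed.

Lemma PS_derive_cIm m : PS_derive cIm m = Im z * cRe m + Re z * cIm m.
Proof.
  unfold PS_derive, cRe, cIm. change (fact (S m)) with (S m * fact m)%nat. rewrite mult_INR.
  pose proof (fact_pos m). assert (INR (S m) <> 0) by (apply not_0_INR; lia).
  simpl Cpow. destruct z as [a b], (Cpow (a, b) m) as [c d]. cbn -[INR fact]. field. split; lra.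
Qed.

Lemma exp_coef_bound (f : C -> R) m :
  (forall w, Rabs (f w) <= Cmod w) -> Rabs (f (z ^ m)%C / INR (fact m)) <= Cmod z ^ m / INR (fact m).
Proof.
  intros Hf. pose proof (fact_pos m).
  unfold Rdiv. rewrite Rabs_mult, (Rabs_pos_eq (/ _)) by (left; apply Rinv_0_lt_compat; lra).
  apply Rmult_le_compat_r; [left; apply Rinv_0_lt_compat; lra|].
  rewrite <- Cmod_pow. apply Hf.
Qed.

Lemma ex_series_cRe r : ex_series (fun m => cRe m * r ^ m).
Proof. apply (ex_series_exp_dominated _ (Cmod z)). intros m. apply exp_coef_bound, re_le_Cmod. Qed.

Lemma ex_series_cIm r : ex_series (fun m => cIm m * r ^ m).
Proof. apply (ex_series_exp_dominated _ (Cmod z)). intros m. apply exp_coef_bound, im_le_Cmod. Qed.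

Lemma is_derive_PSeries_cRe t :
  is_derive (PSeries cRe) t (Re z * PSeries cRe t - Im z * PSeries cIm t).
Proof.
  rewrite <- !PSeries_scal, <- PSeries_minus.
  - rewrite (PSeries_ext _ (PS_derive cRe)) by (intros m; now rewrite PS_derive_cRe).
    apply is_derive_PSeries, CV_radius_infinite, ex_series_cRe.
  - apply ex_pseries_scal; [apply Rmult_comm | apply CV_radius_inside, CV_radius_infinite, ex_series_cRe].
  - apply ex_pseries_scal; [apply Rmult_comm | apply CV_radius_inside, CV_radius_infinite, ex_series_cIm].
Qed.

Lemma is_derive_PSeries_cIm t :
  is_derive (PSeries cIm) t (Im z * PSeries cRe t + Re z * PSeries cIm t).
Proof.
  rewrite <- !PSeries_scal, <- PSeries_plus.
  - rewrite (PSeries_ext _ (PS_derive cIm)) by (intros m; now rewrite PS_derive_cIm).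
    apply is_derive_PSeries, CV_radius_infinite, ex_series_cIm.
  - apply ex_pseries_scal; [apply Rmult_comm | apply CV_radius_inside, CV_radius_infinite, ex_series_cRe].
  - apply ex_pseries_scal; [apply Rmult_comm | apply CV_radius_inside, CV_radius_infinite, ex_series_cIm].
Qed.

Lemma is_series_Cexp : is_series (fun m => RtoC (/ INR (fact m)) * z ^ m)%C (Cexp z).
Proof.
  destruct (linear_system_solution (Re z) (Im z) (PSeries cRe) (PSeries cIm)
              is_derive_PSeries_cRe is_derive_PSeries_cIm) with (t := 1) as [HX HY].
  { rewrite PSeries_0. unfold cRe. simpl. field. }
  { rewrite PSeries_0. unfold cIm. simpl. field. }
  rewrite !Rmult_1_r in HX, HY.
  apply is_series_Re_Im. split.
  - simpl Re at 2. rewrite <- HX.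
    eapply is_series_ext; [|apply Series_correct, (ex_series_cRe 1)].
    intros m. rewrite re_scal_l, pow1. unfold cRe. rewrite Rmult_1_r. apply Rmult_comm.
  - simpl Im at 2. rewrite <- HY.
    eapply is_series_ext; [|apply Series_correct, (ex_series_cIm 1)].
    intros m. rewrite im_scal_l, pow1. unfold cIm. rewrite Rmult_1_r. apply Rmult_comm.
Qed.

End ExpSeries.

Lemma Cexp_add (z w : C) : Cexp (z + w) = (Cexp z * Cexp w)%C.
Proof.
  destruct z as [a b], w as [c d]. unfold Cexp. simpl.
  rewrite exp_plus, cos_plus, sin_plus. unfold Cmult; simpl. f_equal; ring.
Qed.

Lemma Cexp_pow (z : C) j : (Cexp z ^ j)%C = Cexp (INR j * Re z, INR j * Im z).
Proof.
  induction j as [|j IH].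
  - unfold Cexp. simpl. rewrite !Rmult_0_l, exp_0, cos_0, sin_0, Rmult_0_r, Rmult_1_r. reflexivity.
  - change (Cexp z ^ S j)%C with (Cexp z * Cexp z ^ j)%C. rewrite IH, <- Cexp_add.
    rewrite S_INR. destruct z as [a b]. unfold Cplus; simpl. f_equal; f_equal; ring.
Qed.

Lemma Cmod_Cexp (z : C) : Cmod (Cexp z) = exp (Re z).
Proof.
  unfold Cmod, Cexp. cbn [fst snd]. pose proof (sin2_cos2 (Im z)) as S2. unfold Rsqr in S2.
  replace ((exp (Re z) * cos (Im z)) ^ 2 + (exp (Re z) * sin (Im z)) ^ 2) with (exp (Re z) ^ 2)
    by (transitivity (exp (Re z) ^ 2 * (sin (Im z) * sin (Im z) + cos (Im z) * cos (Im z)));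
        [rewrite S2|]; ring).
  apply sqrt_pow2. left. apply exp_pos.
Qed.

Lemma Cexp_sub_1 (z : C) : Cexp z = (RtoC (exp 1) * Cexp (z - 1))%C.
Proof.
  destruct z as [a b]. unfold Cexp. simpl.
  replace (b + - 0) with b by ring.
  replace (exp a) with (exp 1 * exp (a + - (1))) by (rewrite <- exp_plus; f_equal; ring).
  unfold Cmult, RtoC; simpl. f_equal; ring.
Qed.

Lemma Cpow_polar r th m :
  Cpow (r * cos th, r * sin th) m = (r ^ m * cos (INR m * th), r ^ m * sin (INR m * th)).
Proof.
  induction m as [|m IH].
  - simpl. rewrite Rmult_0_l, cos_0, sin_0. unfold RtoC. f_equal; ring.
  - change (Cpow (r * cos th, r * sin th) (S m)) with
      (Cmult (r * cos th, r * sin th) (Cpow (r * cos th, r * sin th) m)).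
    rewrite IH, S_INR. replace ((INR m + 1) * th) with (th + INR m * th) by ring.
    rewrite cos_plus, sin_plus. unfold Cmult; simpl. f_equal; ring.
Qed.

Lemma is_series_Im_Cexp_polar x t :
  is_series (fun m => x ^ m / INR (fact m) * sin (INR m * t)) (Im (Cexp (x * cos t, x * sin t))).
Proof.
  destruct (proj1 (is_series_Re_Im _ _) (is_series_Cexp (x * cos t, x * sin t))) as [_ H].
  eapply is_series_ext; [|exact H]. intros m.
  cbv beta. rewrite im_scal_l, Cpow_polar. simpl. field. apply Rgt_not_eq, fact_pos.
Qed.

Lemma is_RInt_Im_Cexp_polar_sin x n : (1 <= n)%nat ->
  is_RInt (fun t => Im (Cexp (x * cos t, x * sin t)) * sin (INR n * t)) 0 PI
    (PI / 2 * (x ^ n / INR (fact n))).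
Proof.
  intros Hn.
  destruct (is_RInt_series (V := R_CompleteNormedModule)
              (fun m t => x ^ m / INR (fact m) * (sin (INR m * t) * sin (INR n * t)))
              (fun t => Im (Cexp (x * cos t, x * sin t)) * sin (INR n * t))
              (fun m => x ^ m / INR (fact m) * (if Nat.eqb m n then PI / 2 else 0))
              (fun m => Rabs x ^ m / INR (fact m)) 0 PI) as [l [Hl Hint]].
  - intros m. apply (is_RInt_scal (V := R_NormedModule)), is_RInt_sin_mult_sin, Hn.
  - intros m t. change (norm ?y) with (Rabs y).
    rewrite Rabs_mult, Rabs_div, RPow_abs, (Rabs_pos_eq (INR _))
      by (apply pos_INR || apply Rgt_not_eq, fact_pos).
    rewrite <- (Rmult_1_r (Rabs (x ^ m) / _)) at 2.
    apply Rmult_le_compat_l.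
    + apply Rmult_le_pos; [apply Rabs_pos | left; apply Rinv_0_lt_compat, fact_pos].
    + rewrite Rabs_mult, <- (Rmult_1_r 1).
      apply Rmult_le_compat; try apply Rabs_pos; apply Rabs_sin_le_1.
  - apply ex_series_exp.
  - intros t. eapply is_series_ext; [|exact (is_series_scal_r _ _ _ (is_series_Im_Cexp_polar x t))].
    intros m. simpl. ring.
  - replace (PI / 2 * (x ^ n / INR (fact n))) with l; [exact Hint|].
    rewrite <- (is_series_unique _ _ Hl). apply is_series_unique.
    eapply is_series_ext; [|apply (is_series_indicator n)].
    intros m. simpl. destruct (Nat.eqb_spec m n) as [->|]; ring.
Qed.

Lemma is_RInt_Cexp_polar_sin x n : (1 <= n)%nat ->
  is_RInt (V := C_R_NormedModule)
    (fun t => Cmult (Cexp (x * cos t, x * sin t)) (RtoC (sin (INR n * t)))) 0 PI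
    (RInt (fun t => Re (Cexp (x * cos t, x * sin t)) * sin (INR n * t)) 0 PI,
     PI / 2 * (x ^ n / INR (fact n))).
Proof.
  intros Hn. apply (is_RInt_fct_extend_pair (U := R_NormedModule) (V := R_NormedModule)).
  - eapply is_RInt_ext; [|apply (RInt_correct (V := R_CompleteNormedModule)), ex_RInt_continuous].
    + intros t _. simpl. ring.
    + intros t _. apply (ex_derive_continuous (V := R_NormedModule)). simpl. auto_derive. easy.
  - eapply is_RInt_ext; [|exact (is_RInt_Im_Cexp_polar_sin x n Hn)].
    intros t _. simpl. ring.
Qed.

(** * Alternating binomial coefficients *)

(* [alt_binom k j] = (-1)^(k-j) C(k,j), generated by Pascal's rule. *)
Fixpoint alt_binom (k j : nat) : R :=
  match k with
  | O => if Nat.eqb j 0 then 1 else 0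
  | S k' => (match j with O => 0 | S j' => alt_binom k' j' end) - alt_binom k' j
  end.

Lemma alt_binom_gt k j : (k < j)%nat -> alt_binom k j = 0.
Proof.
  revert j. induction k as [|k IH]; intros j Hj; simpl.
  - destruct (Nat.eqb_spec j 0); [lia|easy].
  - destruct j as [|j]; [lia|]. rewrite !IH by lia. ring.
Qed.

Lemma Cpow_sub_1 (V : C) k :
  Cpow (V - 1) k = sum_n (fun j => RtoC (alt_binom k j) * Cpow V j)%C k.
Proof.
  induction k as [|k IH].
  - rewrite sum_O. simpl. in_type C; ring.
  - change (Cpow (V - 1) (S k)) with ((V - 1) * Cpow (V - 1) k)%C. rewrite IH.
    rewrite (sum_n_ext (fun j => RtoC (alt_binom (S k) j) * Cpow V j)%C
                       (fun j => RtoC (match j with O => 0 | S j' => alt_binom k j' end) * Cpow V j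
                                   - RtoC (alt_binom k j) * Cpow V j)%C).
    2: { intros j. simpl alt_binom. rewrite RtoC_minus. in_type C; ring. }
    rewrite sum_n_Cminus, sum_n_shift, sum_Sn, (alt_binom_gt k (S k)) by lia.
    rewrite (sum_n_ext (fun j => RtoC (match S j with O => 0 | S j' => alt_binom k j' end)
                                 * Cpow V (S j))%C
                       (fun j => V * (RtoC (alt_binom k j) * Cpow V j))%C)
      by (intros j; simpl; in_type C; ring).
    rewrite sum_n_Cmult_l. unfold plus; simpl. in_type C; ring.
Qed.

Lemma pow_sub_1 (y : R) k : (y - 1) ^ k = sum_n (fun j => alt_binom k j * y ^ j) k.
Proof.
  pose proof (f_equal Re (Cpow_sub_1 (RtoC y) k)) as H.
  rewrite <- RtoC_minus, <- RtoC_pow, re_RtoC, Re_sum_n in H. rewrite H.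
  apply sum_n_ext. intros j. now rewrite <- RtoC_pow, <- RtoC_mult, re_RtoC.
Qed.

Lemma sum_Rabs_alt_binom k : sum_n (fun j => Rabs (alt_binom k j)) k <= 2 ^ k.
Proof.
  induction k as [|k IH].
  - rewrite sum_O. simpl. rewrite Rabs_R1. lra.
  - eapply Rle_trans.
    { apply (sum_n_le_loc _ (fun j => plus (Rabs (match j with O => 0 | S j' => alt_binom k j' end))
                                          (Rabs (alt_binom k j)))).
      intros j _. simpl alt_binom. unfold Rminus. rewrite <- (Rabs_Ropp (alt_binom k j)). apply Rabs_triang. }
    rewrite sum_n_plus, sum_n_shift, sum_Sn, (alt_binom_gt k (S k)) by lia.
    rewrite !Rabs_R0. unfold plus; simpl. lra.
Qed.

Lemma Rabs_sum_alt_binom_le k (g : nat -> R) c :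
  (forall j, (j <= k)%nat -> Rabs (g j) <= c) ->
  Rabs (sum_n (fun j => alt_binom k j * g j) k) <= 2 ^ k * c.
Proof.
  intros Hg. assert (Hc : 0 <= c) by (eapply Rle_trans; [apply Rabs_pos | apply (Hg 0%nat); lia]).
  eapply Rle_trans; [apply (norm_sum_n_m (V := R_NormedModule))|].
  eapply Rle_trans; [apply (sum_n_le_loc _ (fun j => c * Rabs (alt_binom k j)))|].
  - intros j Hj. change (norm ?x) with (Rabs x). rewrite Rabs_mult, Rmult_comm.
    apply Rmult_le_compat_r; [apply Rabs_pos | auto].
  - rewrite (sum_n_mult_l (K := R_Ring)). change (mult c ?x) with (c * x). rewrite Rmult_comm.
    apply Rmult_le_compat_r; [exact Hc | apply sum_Rabs_alt_binom].
Qed.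

Lemma is_series_Cexp_div_pow (u : C) p : u <> 0%C ->
  is_series (fun k => RtoC (/ INR (fact (k + p))) * u ^ k)%C
    (Cexp u / u ^ p
     - sum_n (fun l => if (l <? p)%nat then 1 / (INR (fact l) * u ^ (p - l)) else RtoC 0) p)%C.
Proof.
  intros Hu. assert (Hup : forall m, (u ^ m)%C <> 0%C) by (intros m; now apply Cpow_nz).
  pose proof (is_series_scal (K := C_AbsRing) (/ u ^ p)%C _ _
                (is_series_drop _ _ p (is_series_Cexp u))) as H.
  assert (Hsum : (sum_n (fun l => if (l <? p)%nat then 1 / (INR (fact l) * u ^ (p - l)) else RtoC 0) p
                 = / u ^ p * sum_n (fun l => if (l <? p)%nat
                                               then RtoC (/ INR (fact l)) * u ^ l else zero) p)%C).
  { rewrite <- sum_n_Cmult_l. apply sum_n_ext. intros l.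
    destruct (Nat.ltb_spec l p) as [Hl|_]; [|cbv [zero]; simpl; in_type C; ring].
    replace (u ^ p)%C with (u ^ l * u ^ (p - l))%C by (rewrite <- Cpow_add_r; f_equal; lia).
    rewrite RtoC_inv by (apply Rgt_not_eq, fact_pos).
    in_type C; field. split; [|split]; auto using fact_neq_0_C. }
  rewrite Hsum.
  set (S := sum_n (fun l => if (l <? p)%nat then RtoC (/ INR (fact l)) * u ^ l else zero)%C p) in *.
  change (is_series (fun k => / u ^ p * (RtoC (/ INR (fact (p + k))) * u ^ (p + k)))
                    (/ u ^ p * (Cexp u - S)))%C in H.
  replace (Cexp u / u ^ p - / u ^ p * S)%C with (/ u ^ p * (Cexp u - S))%C by (in_type C; field; auto).
  eapply is_series_ext; [|exact H].
  intros k. simpl. rewrite Cpow_add_r, (Nat.add_comm p k). in_type C; field. auto.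
Qed.

Definition exp_exp_i (t : R) : C := Cexp (Cexp (0, t)).

Lemma exp_exp_i_pow t j :
  Cpow (exp_exp_i t) j = Cexp (INR j * cos t, INR j * sin t).
Proof.
  unfold exp_exp_i. rewrite Cexp_pow. unfold Cexp at 2 3. simpl.
  now rewrite exp_0, !Rmult_1_l.
Qed.

Lemma Cmod_exp_exp_i_le t : Cmod (exp_exp_i t) <= exp 1.
Proof.
  unfold exp_exp_i. rewrite Cmod_Cexp. unfold Cexp. simpl. rewrite exp_0, Rmult_1_l.
  apply exp_le_compat, COS_bound.
Qed.

Lemma exp_exp_i_neq_1 t : (exp_exp_i t - 1)%C <> 0%C.
Proof.
  unfold exp_exp_i, Cexp. simpl. rewrite exp_0, !Rmult_1_l.
  intros H. assert (HR := f_equal Re H). assert (HI := f_equal Im H). simpl in HR, HI.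
  pose proof (exp_pos (cos t)) as He.
  assert (Hs : sin (sin t) = 0) by (apply (Rmult_eq_reg_l (exp (cos t))); lra).
  assert (Hst : sin t = 0).
  { pose proof (SIN_bound t) as [? ?]. pose proof PI2_1.
    destruct (Rtotal_order (sin t) 0) as [Hl|[He0|Hg]]; auto.
    - assert (0 < sin (- sin t)) by (apply sin_gt_0; lra). rewrite sin_neg in *. lra.
    - assert (0 < sin (sin t)) by (apply sin_gt_0; lra). lra. }
  rewrite Hst, cos_0, Rmult_1_r in HR.
  assert (Hc : cos t = 0) by (apply exp_inv; rewrite exp_0; lra).
  pose proof (sin2_cos2 t) as S2. rewrite Hst, Hc in S2. unfold Rsqr in S2. lra.
Qed.

Definition integrand_term (n p k : nat) (t : R) : C :=
  (RtoC (exp 1 / INR (fact (k + p))) * (Cpow (exp_exp_i t - 1) k * RtoC (sin (INR n * t))))%C.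

Lemma is_series_thm7_integrand n p t :
  is_series (fun k => integrand_term n p k t) (thm7_integrand n p t).
Proof.
  set (u := (exp_exp_i t - 1)%C).
  set (S := sum_n (fun l => if (l <? p)%nat then 1 / (INR (fact l) * u ^ (p - l)) else RtoC 0)%C p).
  assert (E : thm7_integrand n p t
              = (RtoC (exp 1 * sin (INR n * t)) * (Cexp u / u ^ p - S))%C).
  { unfold thm7_integrand. cbv zeta. fold (exp_exp_i t). fold u S.
    rewrite (Cexp_sub_1 (exp_exp_i t)), RtoC_mult. fold u. in_type C; field. apply Cpow_nz, exp_exp_i_neq_1. }
  rewrite E.
  eapply is_series_ext;
    [|exact (is_series_scal (K := C_AbsRing) (RtoC (exp 1 * sin (INR n * t))) _ _
               (is_series_Cexp_div_pow u p (exp_exp_i_neq_1 t)))].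
  intros k. unfold integrand_term. fold u. unfold Rdiv. rewrite !RtoC_mult.
  change (scal ?a ?b) with (Cmult a b). in_type C; ring.
Qed.

Lemma is_RInt_integrand_term n p k : (1 <= n)%nat ->
  exists c : C, is_RInt (V := C_R_NormedModule) (integrand_term n p k) 0 PI c /\
    Im c = exp 1 / INR (fact (k + p))
           * sum_n (fun j => alt_binom k j * (PI / 2 * (INR j ^ n / INR (fact n)))) k.
Proof.
  intros Hn.
  set (f j t := Cmult (Cexp (INR j * cos t, INR j * sin t)) (RtoC (sin (INR n * t)))).
  set (J j := (RInt (fun t => Re (Cexp (INR j * cos t, INR j * sin t)) * sin (INR n * t)) 0 PI,
               PI / 2 * (INR j ^ n / INR (fact n))) : C).
  pose proof (is_RInt_scal (V := C_R_NormedModule) _ 0 PI (exp 1 / INR (fact (k + p))) _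
    (is_RInt_sum_n (V := C_R_NormedModule) (fun j t => scal (alt_binom k j) (f j t))
       (fun j => scal (alt_binom k j) (J j)) 0 PI k
       (fun j => is_RInt_scal _ _ _ _ _ (is_RInt_Cexp_polar_sin (INR j) n Hn)))) as H.
  eexists. split; [eapply is_RInt_ext; [|exact H]|].
  - intros t _. cbv beta.
    change (@sum_n (NormedModule.AbelianMonoid R_AbsRing C_R_NormedModule)) with (@sum_n C_AbelianMonoid).
    unfold integrand_term. rewrite Cpow_sub_1, scal_R_Cmult. f_equal.
    rewrite Cmult_comm, <- sum_n_Cmult_l. apply sum_n_ext. intros j.
    rewrite scal_R_Cmult, exp_exp_i_pow. unfold f. in_type C; ring.
  - change (@sum_n (NormedModule.AbelianMonoid R_AbsRing C_R_NormedModule)) with (@sum_n C_AbelianMonoid).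
    now rewrite scal_R_Cmult, im_scal_l, Im_sum_n.
Qed.

Lemma Cmod_integrand_term_le n p k t :
  Cmod (integrand_term n p k t) <= exp 1 * ((exp 1 + 1) ^ k / INR (fact k)).
Proof.
  unfold integrand_term. rewrite !Cmod_mult, Cmod_pow, !Cmod_R.
  pose proof (exp_pos 1). pose proof (fact_pos k). pose proof (fact_pos (k + p)).
  assert (Hu : Cmod (exp_exp_i t - 1) <= exp 1 + 1).
  { eapply Rle_trans; [apply Cmod_triangle|]. rewrite Cmod_opp, Cmod_1.
    pose proof (Cmod_exp_exp_i_le t). lra. }
  rewrite Rabs_pos_eq by (apply Rdiv_le_0_compat; lra).
  apply Rle_trans with (exp 1 / INR (fact k) * ((exp 1 + 1) ^ k * 1)); [|right; unfold Rdiv; ring].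
  apply Rmult_le_compat.
  - apply Rdiv_le_0_compat; lra.
  - apply Rmult_le_pos; [apply pow_le, Cmod_ge_0 | apply Rabs_pos].
  - apply Rmult_le_compat_l; [lra|]. apply Rinv_le_contravar; [lra | apply le_INR, fact_le; lia].
  - apply Rmult_le_compat; [apply pow_le, Cmod_ge_0 | apply Rabs_pos | | apply Rabs_sin_le_1].
    apply pow_incr. split; [apply Cmod_ge_0 | exact Hu].
Qed.

Lemma is_series_Im_RInt_thm7_integrand n p : (1 <= n)%nat ->
  is_series
    (fun k => exp 1 / INR (fact (k + p))
              * sum_n (fun j => alt_binom k j * (PI / 2 * (INR j ^ n / INR (fact n)))) k)
    (Im (RInt (V := C_R_CompleteNormedModule) (thm7_integrand n p) 0 PI)).
Proof.
  intros Hn.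
  set (I k := RInt (V := C_R_CompleteNormedModule) (integrand_term n p k) 0 PI).
  assert (HI : forall k, is_RInt (V := C_R_NormedModule) (integrand_term n p k) 0 PI (I k) /\
                 Im (I k) = exp 1 / INR (fact (k + p))
                   * sum_n (fun j => alt_binom k j * (PI / 2 * (INR j ^ n / INR (fact n)))) k).
  { intros k. destruct (is_RInt_integrand_term n p k Hn) as [c [Hc HIm]].
    unfold I. now rewrite (is_RInt_unique (V := C_R_CompleteNormedModule) _ _ _ _ Hc). }
  destruct (is_RInt_series (V := C_R_CompleteNormedModule) (integrand_term n p) (thm7_integrand n p)
              I (fun k => exp 1 * ((exp 1 + 1) ^ k / INR (fact k))) 0 PI) as [l [Hl Hint]].
  - intros k. apply HI.
  - intros k t. rewrite norm_C_R. apply Cmod_integrand_term_le.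
  - apply (ex_series_scal_l (V := R_NormedModule)), ex_series_exp.
  - intros t. exact (is_series_thm7_integrand n p t).
  - rewrite (is_RInt_unique _ _ _ _ Hint).
    eapply is_series_ext; [|exact (proj2 (proj1 (is_series_Re_Im I l) Hl))].
    intros k. apply HI.
Qed.

(** * Derivatives of the exponential generating function *)

(* The m-th derivative of the k-th term p!/(k+p)! (e^x - 1)^k of the EGF of the
   p-Bell numbers. *)
Definition egf_term_deriv (p m k : nat) (x : R) : R :=
  INR (fact p) / INR (fact (k + p))
  * sum_n (fun j => alt_binom k j * (INR j ^ m * exp (INR j * x))) k.

Definition egf_majorant (p m k : nat) (r : R) : R :=
  INR (fact p) / INR (fact (k + p)) * (2 ^ k * (INR k ^ m * exp (INR k * r))).

Lemma egf_majorant_ge_0 p m k r : 0 <= egf_majorant p m k r.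
Proof.
  unfold egf_majorant. pose proof (fact_pos (k + p)). pose proof (exp_pos (INR k * r)).
  apply Rmult_le_pos; [apply Rdiv_le_0_compat; [apply pos_INR | lra]|].
  apply Rmult_le_pos; [apply pow_le; lra|].
  apply Rmult_le_pos; [apply pow_le, pos_INR | lra].
Qed.

Lemma Rabs_egf_term_deriv_le p m k r y : Rabs y <= r ->
  Rabs (egf_term_deriv p m k y) <= egf_majorant p m k r.
Proof.
  intros Hy. unfold egf_term_deriv, egf_majorant. pose proof (fact_pos (k + p)).
  assert (Hc : 0 <= INR (fact p) / INR (fact (k + p))) by (apply Rdiv_le_0_compat; [apply pos_INR | lra]).
  rewrite Rabs_mult, (Rabs_pos_eq _ Hc). apply Rmult_le_compat_l; [exact Hc|].
  apply Rabs_sum_alt_binom_le. intros j Hj.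
  rewrite Rabs_mult, Rabs_pos_eq by (apply pow_le, pos_INR).
  rewrite Rabs_pos_eq by (left; apply exp_pos).
  apply le_INR in Hj. pose proof (pos_INR j). apply Rabs_le_between in Hy.
  apply Rmult_le_compat; [apply pow_le, pos_INR | left; apply exp_pos | apply pow_incr; lra |].
  apply exp_le_compat. nra.
Qed.

Lemma ex_series_egf_majorant p m r : ex_series (fun k => egf_majorant p m k r).
Proof.
  apply (ex_series_le (V := R_CompleteNormedModule) _
           (fun k => INR (fact p) * ((2 * 2 ^ m * exp r) ^ k / INR (fact k)))).
  2: apply (ex_series_scal_l (V := R_NormedModule)), ex_series_exp.
  intros k. change (norm ?x) with (Rabs x). rewrite Rabs_pos_eq by apply egf_majorant_ge_0.
  unfold egf_majorant, Rdiv. rewrite Rmult_assoc. apply Rmult_le_compat_l; [apply pos_INR|].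
  rewrite !Rpow_mult_distr, <- exp_pow_INR.
  assert (Hkm : INR k ^ m <= (2 ^ m) ^ k).
  { rewrite <- pow_mult, Nat.mul_comm, pow_mult. apply pow_incr. split; [apply pos_INR | apply INR_le_pow2]. }
  assert (Hf : / INR (fact (k + p)) <= / INR (fact k))
    by (apply Rinv_le_contravar; [apply fact_pos | apply le_INR, fact_le; lia]).
  pose proof (fact_pos (k + p)). pose proof (pow_le 2 k ltac:(lra)).
  pose proof (pow_le _ m (pos_INR k)). pose proof (pow_lt _ k (exp_pos r)).
  apply Rle_trans with (/ INR (fact k) * (2 ^ k * ((2 ^ m) ^ k * exp r ^ k))); [|right; ring].
  apply Rmult_le_compat.
  - left. apply Rinv_0_lt_compat. lra.
  - apply Rmult_le_pos; [lra|]. apply Rmult_le_pos; lra.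
  - exact Hf.
  - apply Rmult_le_compat_l; [lra|]. apply Rmult_le_compat_r; lra.
Qed.

Lemma ex_series_egf_term_deriv p m y : ex_series (fun k => egf_term_deriv p m k y).
Proof.
  apply (ex_series_le (V := R_CompleteNormedModule) _ (fun k => egf_majorant p m k (Rabs y))).
  - intros k. apply Rabs_egf_term_deriv_le, Rle_refl.
  - apply ex_series_egf_majorant.
Qed.

Lemma is_derive_egf_term_deriv p m k y :
  is_derive (egf_term_deriv p m k) y (egf_term_deriv p (S m) k y).
Proof.
  unfold egf_term_deriv. apply is_derive_scal.
  apply (is_derive_sum_n (fun j y => alt_binom k j * (INR j ^ m * exp (INR j * y)))).
  intros j _. auto_derive; [easy|]. simpl. ring.
Qed.

Lemma derivable_pt_lim_SP_egf_term_deriv p m N y :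
  derivable_pt_lim (SP (egf_term_deriv p m) N) y (SP (egf_term_deriv p (S m)) N y).
Proof.
  apply is_derive_Reals. induction N as [|N IH]; unfold SP; simpl.
  - apply is_derive_egf_term_deriv.
  - apply (is_derive_plus (fun x => sum_f_R0 (fun k => egf_term_deriv p m k x) N)).
    + exact IH.
    + apply is_derive_egf_term_deriv.
Qed.

Lemma CVN_egf_term_deriv p m (r : posreal) : CVN_r (egf_term_deriv p m) r.
Proof.
  exists (fun k => egf_majorant p m k r), (Series (fun k => egf_majorant p m k r)). split.
  - apply is_series_Reals.
    eapply is_series_ext; [|apply Series_correct, ex_series_egf_majorant].
    intros k. symmetry. apply Rabs_pos_eq, egf_majorant_ge_0.
  - intros k y Hy. apply Rabs_egf_term_deriv_le.
    unfold Boule in Hy. rewrite Rminus_0_r in Hy. left. exact Hy.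
Qed.

Definition egf_deriv (p m : nat) (x : R) : R := Series (fun k => egf_term_deriv p m k x).

(* Termwise differentiation, justified by normal convergence on every disc. *)
Lemma is_derive_egf_deriv p m x : is_derive (egf_deriv p m) x (egf_deriv p (S m) x).
Proof.
  assert (Hr : 0 < Rabs x + 1) by (pose proof (Rabs_pos x); lra).
  set (r := mkposreal _ Hr).
  destruct (CVN_CVU_r _ r (CVN_egf_term_deriv p (S m) r) x) as [e He];
    [simpl; lra|].
  apply is_derive_Reals.
  apply (Ranalysis5.derivable_pt_lim_CVU (SP (egf_term_deriv p m)) (SP (egf_term_deriv p (S m)))
           (egf_deriv p m) (egf_deriv p (S m)) x x e).
  - unfold Boule. rewrite Rminus_eq_0, Rabs_R0. apply cond_pos.
  - intros y N _. apply derivable_pt_lim_SP_egf_term_deriv.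
  - intros y _. unfold SP. apply is_series_Reals, Series_correct, ex_series_egf_term_deriv.
  - exact He.
  - intros y Hy. apply (CVU_continuity _ _ x e He); [|exact Hy].
    intros N z _. apply continuity_pt_filterlim, (ex_derive_continuous (V := R_NormedModule)).
    eexists. apply is_derive_Reals, derivable_pt_lim_SP_egf_term_deriv.
Qed.

Lemma Derive_n_egf_deriv p N x : Derive_n (egf_deriv p 0) N x = egf_deriv p N x.
Proof.
  revert x. induction N as [|N IH]; intros x; [reflexivity|].
  simpl. rewrite (Derive_ext _ (egf_deriv p N)) by apply IH.
  apply is_derive_unique, is_derive_egf_deriv.
Qed.

Lemma pBell_egf_eq p x : pBell_egf p x = egf_deriv p 0 x.
Proof.
  unfold pBell_egf, egf_deriv. apply Series_ext. intros k. unfold egf_term_deriv.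
  rewrite pow_sub_1.
  rewrite (sum_n_ext _ (fun j => alt_binom k j * exp (INR j * x)))
    by (intros j; now rewrite exp_pow_INR).
  rewrite (sum_n_ext (fun j => alt_binom k j * (INR j ^ 0 * exp (INR j * x)))
                     (fun j => alt_binom k j * exp (INR j * x)))
    by (intros j; simpl; now rewrite Rmult_1_l).
  unfold Binomial.C. replace (k + p - p)%nat with k by lia.
  pose proof (fact_pos k). pose proof (fact_pos p). pose proof (fact_pos (k + p)).
  field. lra.
Qed.

Lemma pBell_eq_Series n p :
  pBell n p = Series (fun k => INR (fact p) / INR (fact (k + p))
                               * sum_n (fun j => alt_binom k j * INR j ^ n) k).
Proof.
  unfold pBell. rewrite (Derive_n_ext _ (egf_deriv p 0)) by apply pBell_egf_eq.
  rewrite Derive_n_egf_deriv. apply Series_ext. intros k. unfold egf_term_deriv.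
  f_equal. apply sum_n_ext. intros j. now rewrite Rmult_0_r, exp_0, Rmult_1_r.
Qed.

Theorem mainTheorem7 (n p : nat) : (1 <= n)%nat ->
  pBell n p =
  2 * INR (fact n) * INR (fact p) / (PI * exp 1) *
  Im (RInt (V := C_R_CompleteNormedModule) (thm7_integrand n p) 0 PI).
Proof.
  intros Hn.
  rewrite <- (is_series_unique _ _ (is_series_Im_RInt_thm7_integrand n p Hn)), pBell_eq_Series.
  rewrite <- Series_scal_l. apply Series_ext. intros k.
  rewrite (sum_n_ext (fun j => alt_binom k j * (PI / 2 * (INR j ^ n / INR (fact n))))
                     (fun j => PI / 2 / INR (fact n) * (alt_binom k j * INR j ^ n)))
    by (intros j; in_type R; field; apply Rgt_not_eq, fact_pos).
  rewrite (sum_n_mult_l (K := R_Ring)).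
  change (@sum_n (Ring.AbelianMonoid R_Ring)) with (@sum_n R_AbelianMonoid).
  change (mult ?a ?b) with (a * b).
  pose proof (fact_pos n). pose proof (fact_pos p). pose proof (fact_pos (k + p)).
  pose proof PI_RGT_0. pose proof (exp_pos 1).
  field. repeat split; lra.
Qed.
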